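(* Let $a>0$, $\alpha\in[0,1)$ and $f\in\mathcal C_a$, and let $g=\mathrm{Sh}_\alpha(f)$. Then $\|g-g^{\pm\eta}\|_{\infty,\mathbb R}\to0$ as $\eta\to0$ (for both signs).
   Context: $\mathcal C_a$ is the set of $C^1$ functions $f:\mathbb R\to\mathbb R$ that are even, satisfy $f(s)=|s|$ for $|s|\ge a$ and are strictly convex on $[-a,a]$. For any function $g$ and $\eta\in(0,1)$, $g^{\pm\eta}(s)=(1\pm\frac\eta2)g\big(s/(1\pm\frac\eta2)\big)$. For $f\in\mathcal C_a$: $F_\alpha(s)=f(s)-\alpha s$, $x_\alpha^+=(f')^{-1}(\alpha)\in[0,a)$ (inverse of $f':[-a,a]\to[-1,1]$); let $F_\alpha^{-1}$ be the inverse of $F_\alpha|_{[x_\alpha^+,\infty)}$, $\phi=F_\alpha^{-1}\circ F_\alpha$, $\delta_x=(1-\alpha)^{-1}F_\alpha(x)-\phi(x)$, $s_\alpha=x_\alpha^++\delta_{x_\alpha^+}$; $x\mapsto x+\delta_x$ is an increasing bijection $(-\infty,x_\alpha^+]\to(-\infty,s_\alpha]$ with inverse $\tau$. Define $\mathrm{Sh}_\alpha(f)(x)=\alpha x+F_\alpha(\tau(x))$ for $x\le s_\alpha$ and $=x$ for $x>s_\alpha$. *)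

From Stdlib Require Import Reals Lra ClassicalEpsilon.
From Coquelicot Require Import Coquelicot.
Open Scope R_scope.

Definition strictly_convex_on (f : R -> R) (lo hi : R) : Prop :=
  forall x y t, lo <= x <= hi -> lo <= y <= hi -> x <> y -> 0 < t < 1 ->
    f (t * x + (1 - t) * y) < t * f x + (1 - t) * f y.

Definition in_Ca (a : R) (f : R -> R) : Prop :=
  (forall x, ex_derive f x) /\
  (forall x, continuous (Derive f) x) /\
  (forall s, f (- s) = f s) /\
  (forall s, a <= Rabs s -> f s = Rabs s) /\
  strictly_convex_on f (- a) a.

Definition choose_R (P : R -> Prop) : R := epsilon (inhabits 0) P.

Section Shift.
Variables (a alpha : R) (f : R -> R).

Definition F_al (s : R) : R := f s - alpha * s.

Definition x_plus : R := choose_R (fun x => - a <= x <= a /\ Derive f x = alpha).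

Definition F_al_inv (y : R) : R := choose_R (fun z => x_plus <= z /\ F_al z = y).
Definition phi (x : R) : R := F_al_inv (F_al x).

Definition delta (x : R) : R := / (1 - alpha) * F_al x - phi x.

Definition s_al : R := x_plus + delta x_plus.

Definition tau (x : R) : R := choose_R (fun y => y <= x_plus /\ y + delta y = x).

End Shift.

Definition Sh (a alpha : R) (f : R -> R) (x : R) : R :=
  if Rle_dec x (s_al a alpha f) then alpha * x + F_al alpha f (tau a alpha f x)
  else x.

(* g^{+eta} (b = true) and g^{-eta} (b = false):
   g^{+-eta}(s) = (1 +- eta/2) g (s / (1 +- eta/2)). *)
Definition pm_factor (b : bool) (eta : R) : R :=
  if b then 1 + eta / 2 else 1 - eta / 2.

Definition g_pm (b : bool) (eta : R) (g : R -> R) (s : R) : R :=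
  pm_factor b eta * g (s / pm_factor b eta).

(* Sh_alpha(f) is (1 + 2 alpha)-Lipschitz and equals |x| outside a compact interval.
   Since |.| is invariant under the dilations g |-> g^{+-eta}, the difference
   g - g^{+-eta} vanishes far out and is O(eta) on the compact part.  The Lipschitz
   bound holds because F_alpha is (1 + alpha)-Lipschitz and tau is 1-Lipschitz, the
   latter since delta is nondecreasing on (-oo, x_alpha^+]: f is 1-Lipschitz, so F_alpha
   climbs with slope at most 1 - alpha on the branch [x_alpha^+, oo) where phi lands. *)

From Pilot Require Import Defs.
From Stdlib Require Import Reals Lra ClassicalEpsilon.
From Coquelicot Require Import Coquelicot.
Open Scope R_scope.

Definition slope (g : R -> R) (x y : R) : R := (g y - g x) / (y - x).

Lemma strictly_convex_slope_lt (g : R -> R) (lo hi x z y : R) :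
  strictly_convex_on g lo hi -> lo <= x -> x < z -> z < y -> y <= hi ->
  slope g x z < slope g x y /\ slope g x y < slope g z y.
Proof.
  intros Hconv Hlo Hxz Hzy Hhi.
  set (t := (y - z) / (y - x)).
  assert (Ht : 0 < t < 1).
  { unfold t; split; [apply Rdiv_lt_0_compat|apply Rlt_div_l]; lra. }
  assert (Hz : z = t * x + (1 - t) * y) by (unfold t; field; lra).
  assert (Hchord := Hconv x y t ltac:(lra) ltac:(lra) ltac:(lra) Ht).
  rewrite <- Hz in Hchord.
  unfold slope; split.
  - apply (Rlt_div_l _ _ (z - x)); [lra|].
    replace ((g y - g x) / (y - x) * (z - x)) with ((1 - t) * (g y - g x))
      by (rewrite Hz; field; lra).
    lra.
  - apply (Rlt_div_r _ _ (y - z)); [lra|].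
    replace ((g y - g x) / (y - x) * (y - z)) with (t * (g y - g x))
      by (rewrite Hz; field; lra).
    lra.
Qed.

Lemma derivable_pt_lim_le_right_quotient (g : R -> R) (x d S delta : R) :
  derivable_pt_lim g x d -> 0 < delta ->
  (forall h, 0 < h < delta -> (g (x + h) - g x) / h <= S) -> d <= S.
Proof.
  intros Hd Hdelta Hq.
  destruct (Rle_or_lt d S) as [HdS|HSd]; [exact HdS|exfalso].
  destruct (Hd (d - S) ltac:(lra)) as [[e He] Hlim]; simpl in Hlim.
  set (h := Rmin delta e / 2).
  assert (Hmin := Rmin_l delta e); assert (Hmin' := Rmin_r delta e).
  assert (Hh : 0 < h < Rmin delta e)
    by (unfold h; assert (0 < Rmin delta e) by (apply Rmin_glb_lt; lra); lra).
  specialize (Hq h ltac:(lra)).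
  specialize (Hlim h ltac:(lra) ltac:(rewrite Rabs_right; lra)).
  apply Rabs_lt_between in Hlim; lra.
Qed.

Lemma derivable_pt_lim_ge_right_quotient (g : R -> R) (x d S delta : R) :
  derivable_pt_lim g x d -> 0 < delta ->
  (forall h, 0 < h < delta -> S <= (g (x + h) - g x) / h) -> S <= d.
Proof.
  intros Hd Hdelta Hq.
  enough (- d <= - S) by lra.
  apply (derivable_pt_lim_le_right_quotient (fun t => - g t) x _ _ delta); trivial.
  - exact (derivable_pt_lim_opp g x d Hd).
  - intros h Hh.
    replace ((- g (x + h) - - g x) / h) with (- ((g (x + h) - g x) / h)) by (field; lra).
    specialize (Hq h Hh); lra.
Qed.

Lemma locally_lt_of_continuity_pt (g : R -> R) (x c : R) :
  continuity_pt g x -> g x < c -> locally x (fun u => g u < c).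
Proof.
  intros Hg Hc; apply (proj1 (continuity_pt_filterlim g x) Hg (fun y => y < c)).
  now apply open_lt.
Qed.

Lemma locally_gt_of_continuity_pt (g : R -> R) (x c : R) :
  continuity_pt g x -> c < g x -> locally x (fun u => c < g u).
Proof.
  intros Hg Hc; apply (proj1 (continuity_pt_filterlim g x) Hg (fun y => c < y)).
  now apply open_gt.
Qed.

Lemma continuity_pt_left_inverse (G psi : R -> R) (p x0 : R) :
  continuity_pt G x0 ->
  (forall u v, p <= u -> u < v -> G u < G v) ->
  (forall x, p <= psi x /\ G (psi x) = G x) ->
  continuity_pt psi x0.
Proof.
  intros HG Hincr Hpsi.
  assert (Hreflect : forall u v, p <= u -> p <= v -> G u < G v -> u < v).
  { intros u v Hu Hv HGuv; destruct (Rtotal_order u v) as [|[->|Hvu]]; trivial.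
    - lra.
    - specialize (Hincr v u Hv Hvu); lra. }
  destruct (Hpsi x0) as [Hp0 HG0].
  apply continuity_pt_locally; intros [eps Heps]; simpl.
  assert (Hup : locally x0 (fun u => psi u < psi x0 + eps)).
  { apply (filter_imp (fun u => G u < G (psi x0 + eps))).
    - intros u Hu; destruct (Hpsi u) as [Hpu HGu].
      apply Hreflect; [lra|lra|now rewrite HGu].
    - apply locally_lt_of_continuity_pt; trivial.
      rewrite <- HG0; apply Hincr; lra. }
  assert (Hdown : locally x0 (fun u => psi x0 - eps < psi u)).
  { destruct (Rlt_or_le (psi x0 - eps) p) as [Hbelow|Habove].
    - apply filter_forall; intros u; destruct (Hpsi u); lra.
    - apply (filter_imp (fun u => G (psi x0 - eps) < G u)).
      + intros u Hu; destruct (Hpsi u) as [Hpu HGu].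
        apply Hreflect; [lra|lra|now rewrite HGu].
      + apply locally_gt_of_continuity_pt; trivial.
        rewrite <- HG0; apply Hincr; lra. }
  apply (filter_imp _ _ (fun u Hu => proj2 (Rabs_lt_between' _ _ _) Hu)).
  now apply filter_and.
Qed.

Lemma IVT_le (g : R -> R) (lo hi y : R) :
  continuity g -> lo <= hi -> g lo <= y <= g hi -> exists x, lo <= x <= hi /\ g x = y.
Proof.
  intros Hg Hlohi Hy.
  destruct (IVT_gen g lo hi y Hg) as [x Hx].
  - rewrite Rmin_left, Rmax_right by lra; exact Hy.
  - rewrite Rmin_left, Rmax_right in Hx by lra; now exists x.
Qed.

Lemma choose_R_spec (P : R -> Prop) : (exists x, P x) -> P (choose_R P).
Proof. apply epsilon_spec. Qed.

Definition lipschitz (L : R) (g : R -> R) : Prop :=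
  forall u v, Rabs (g v - g u) <= L * Rabs (v - u).

Lemma lipschitz_glue (g : R -> R) (L s : R) :
  (forall u v, u <= v <= s -> Rabs (g v - g u) <= L * (v - u)) ->
  (forall u v, s <= u <= v -> Rabs (g v - g u) <= L * (v - u)) ->
  lipschitz L g.
Proof.
  intros Hleft Hright.
  assert (Hord : forall u v, u <= v -> Rabs (g v - g u) <= L * (v - u)).
  { intros u v Huv.
    destruct (Rle_or_lt v s) as [Hv|Hv]; [apply Hleft; lra|].
    destruct (Rle_or_lt s u) as [Hu|Hu]; [apply Hright; lra|].
    replace (g v - g u) with ((g v - g s) + (g s - g u)) by ring.
    eapply Rle_trans; [apply Rabs_triang|].
    specialize (Hleft u s ltac:(lra)); specialize (Hright s v ltac:(lra)); lra. }
  intros u v; destruct (Rle_or_lt u v) as [Huv|Hvu].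
  - rewrite (Rabs_pos_eq (v - u)) by lra; now apply Hord.
  - rewrite Rabs_minus_sym, (Rabs_minus_sym v), (Rabs_pos_eq (u - v)) by lra.
    apply Hord; lra.
Qed.

Lemma dilation_error_bound (g : R -> R) (L M c : R) :
  0 <= L -> 0 <= M -> 1 / 2 <= c <= 3 / 2 -> lipschitz L g ->
  (forall x, M <= Rabs x -> g x = Rabs x) ->
  forall s, Rabs (g s - c * g (s / c)) <= Rabs (c - 1) * (4 * L * M + Rabs (g 0)).
Proof.
  intros HL HM Hc Hlip Habs s.
  set (t := s / c).
  assert (Hs : s = c * t) by (unfold t; field; lra).
  assert (Hst : Rabs s = c * Rabs t) by (rewrite Hs, Rabs_mult, (Rabs_pos_eq c); lra).
  pose proof (Rabs_pos t); pose proof (Rabs_pos (c - 1)); pose proof (Rabs_pos (g 0)).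
  destruct (Rle_or_lt (2 * M) (Rabs t)) as [Hfar|Hnear].
  - assert (M <= Rabs s) by nra.
    rewrite (Habs s), (Habs t), Hst by lra.
    rewrite Rminus_diag, Rabs_R0.
    apply Rmult_le_pos; [lra|]; pose proof (Rmult_le_pos L M HL HM); lra.
  - assert (Hgst : Rabs (g s - g t) <= L * Rabs (c - 1) * Rabs t).
    { rewrite Rmult_assoc, <- Rabs_mult.
      replace ((c - 1) * t) with (s - t) by (rewrite Hs; ring); apply Hlip. }
    assert (Hgt : Rabs (g t) <= Rabs (g 0) + L * Rabs t).
    { replace (g t) with (g 0 + (g t - g 0)) by ring.
      eapply Rle_trans; [apply Rabs_triang|].
      pose proof (Hlip 0 t) as Ht; rewrite Rminus_0_r in Ht; lra. }
    replace (g s - c * g t) with ((g s - g t) - (c - 1) * g t) by ring.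
    eapply Rle_trans; [apply Rabs_triang|].
    rewrite Rabs_Ropp, Rabs_mult.
    assert (L * Rabs t <= 2 * L * M) by nra.
    nra.
Qed.

Lemma dilation_uniformly_close (g : R -> R) (L M : R) :
  0 <= L -> 0 <= M -> lipschitz L g -> (forall x, M <= Rabs x -> g x = Rabs x) ->
  forall b : bool, forall eps : R, 0 < eps ->
    exists eta0 : R, 0 < eta0 /\
      forall eta : R, 0 < eta < 1 -> eta < eta0 ->
        forall s : R, Rabs (g s - g_pm b eta g s) <= eps.
Proof.
  intros HL HM Hlip Habs b eps Heps.
  set (K := 4 * L * M + Rabs (g 0)).
  assert (HK : 0 <= K)
    by (unfold K; pose proof (Rabs_pos (g 0)); pose proof (Rmult_le_pos L M HL HM); lra).
  exists (eps / (K + 1)); split; [apply Rdiv_lt_0_compat; lra|].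
  intros eta Heta Heta0 s.
  apply (proj2 (Rlt_div_r eta eps (K + 1) ltac:(lra))) in Heta0.
  assert (Hc : Rabs (pm_factor b eta - 1) <= eta / 2)
    by (apply Rabs_le_between; destruct b; unfold pm_factor; lra).
  unfold g_pm; eapply Rle_trans.
  - apply (dilation_error_bound g L M); trivial; destruct b; unfold pm_factor; lra.
  - fold K.
    assert (Rabs (pm_factor b eta - 1) * K <= eta / 2 * K) by (apply Rmult_le_compat_r; lra).
    nra.
Qed.

Section ClassCa.

Variables (a : R) (f : R -> R).
Hypotheses (Ha : 0 < a) (Hf : in_Ca a f).

Lemma Ca_derivable x : derivable_pt_lim f x (Derive f x).
Proof. apply is_derive_Reals, Derive_correct, Hf. Qed.

Lemma Ca_continuity_Derive : continuity (Derive f).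
Proof. intros x; apply continuity_pt_filterlim, Hf. Qed.

Lemma Ca_right s : a <= s -> f s = s.
Proof.
  intros Hs; destruct Hf as (_ & _ & _ & Habs & _).
  rewrite Habs; rewrite Rabs_pos_eq; lra.
Qed.

Lemma Ca_left s : s <= - a -> f s = - s.
Proof.
  intros Hs; destruct Hf as (_ & _ & _ & Habs & _).
  rewrite Habs; rewrite Rabs_left1; lra.
Qed.

Lemma Ca_Derive_opp x : Derive f (- x) = - Derive f x.
Proof.
  destruct Hf as (_ & _ & Heven & _).
  apply (uniqueness_limite f (- x)); [apply Ca_derivable|].
  apply derivable_pt_lim_mirr_rev; rewrite !Ropp_involutive.
  apply is_derive_Reals, (is_derive_ext f); [intros t; unfold mirr_fct; now rewrite Heven|].
  apply is_derive_Reals, Ca_derivable.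
Qed.

Lemma Ca_Derive_right x : a <= x -> Derive f x = 1.
Proof.
  intros Hx.
  assert (Hq : forall h, 0 < h < 1 -> (f (x + h) - f x) / h = 1).
  { intros h Hh; rewrite !Ca_right by lra; field; lra. }
  apply Rle_antisym.
  - apply (derivable_pt_lim_le_right_quotient f x _ _ 1 (Ca_derivable x)); [lra|].
    intros h Hh; rewrite Hq; lra.
  - apply (derivable_pt_lim_ge_right_quotient f x _ _ 1 (Ca_derivable x)); [lra|].
    intros h Hh; rewrite Hq; lra.
Qed.

Lemma Ca_Derive_left x : x <= - a -> Derive f x = -1.
Proof.
  intros Hx; rewrite <- (Ropp_involutive x), Ca_Derive_opp, Ca_Derive_right; lra.
Qed.

Lemma Ca_Derive_le_slope x y : - a <= x -> x < y -> y <= a -> Derive f x <= slope f x y.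
Proof.
  intros Hx Hxy Hy.
  apply (derivable_pt_lim_le_right_quotient f x _ _ (y - x) (Ca_derivable x)); [lra|].
  intros h Hh.
  replace ((f (x + h) - f x) / h) with (slope f x (x + h)) by (unfold slope; f_equal; ring).
  left; apply (strictly_convex_slope_lt f (- a) a x (x + h) y); try lra; apply Hf.
Qed.

Lemma Ca_slope_le_Derive x y : - a <= x -> x < y -> y <= a -> slope f x y <= Derive f y.
Proof.
  intros Hx Hxy Hy.
  destruct Hf as (_ & _ & Heven & _).
  assert (Hslope : slope f x y = - slope f (- y) (- x)).
  { unfold slope; rewrite !Heven; field; lra. }
  replace (Derive f y) with (- Derive f (- y)) by (rewrite Ca_Derive_opp; ring).
  rewrite Hslope; apply Ropp_le_contravar, Ca_Derive_le_slope; lra.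
Qed.

Lemma Ca_Derive_increasing x y : - a <= x -> x < y -> y <= a -> Derive f x < Derive f y.
Proof.
  intros Hx Hxy Hy; set (m := (x + y) / 2).
  destruct (strictly_convex_slope_lt f (- a) a x m y) as [Hl Hr];
    try (unfold m; lra); try apply Hf.
  assert (Hxm := Ca_Derive_le_slope x m ltac:(lra) ltac:(unfold m; lra) ltac:(unfold m; lra)).
  assert (Hmy := Ca_slope_le_Derive m y ltac:(unfold m; lra) ltac:(unfold m; lra) ltac:(lra)).
  lra.
Qed.

Lemma Ca_Derive_bound x : - 1 <= Derive f x <= 1.
Proof.
  destruct (Rle_or_lt a x) as [Hr|Hr]; [rewrite Ca_Derive_right; lra|].
  destruct (Rle_or_lt x (- a)) as [Hl|Hl]; [rewrite Ca_Derive_left; lra|].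
  rewrite <- (Ca_Derive_right a), <- (Ca_Derive_left (- a)) by lra.
  split; left; apply Ca_Derive_increasing; lra.
Qed.

Lemma Ca_diff_bound u v : u <= v -> Rabs (f v - f u) <= v - u.
Proof.
  intros Huv; destruct (Req_dec u v) as [->|Hne].
  - rewrite Rminus_diag, Rabs_R0; lra.
  - destruct (MVT_cor2 f (Derive f) u v ltac:(lra)) as [c [Hc _]].
    { intros c _; apply Ca_derivable. }
    rewrite Hc, Rabs_mult, (Rabs_pos_eq (v - u)) by lra.
    assert (Rabs (Derive f c) <= 1) by (apply Rabs_le_between, Ca_Derive_bound).
    nra.
Qed.

End ClassCa.

Section Shift.

Variables (a alpha : R) (f : R -> R).
Hypotheses (Ha : 0 < a) (Hal : 0 <= alpha < 1) (Hf : in_Ca a f).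

Local Notation F := (F_al alpha f).
Local Notation xp := (x_plus a alpha f).
Local Notation F_inv := (F_al_inv a alpha f).
Local Notation phi := (phi a alpha f).
Local Notation delta := (delta a alpha f).
Local Notation tau := (tau a alpha f).
Local Notation s_al := (s_al a alpha f).

Lemma x_plus_spec : - a <= xp <= a /\ Derive f xp = alpha.
Proof.
  unfold x_plus; apply choose_R_spec.
  destruct (IVT_le (Derive f) (- a) a alpha (Ca_continuity_Derive a f Hf)) as [x Hx].
  - lra.
  - rewrite (Ca_Derive_left a f Ha Hf), (Ca_Derive_right a f Ha Hf); lra.
  - now exists x.
Qed.

Lemma Derive_gt_alpha c : xp < c -> alpha < Derive f c.
Proof.
  intros Hc; destruct x_plus_spec as [Hxp Hxp_alpha].
  destruct (Rle_or_lt c a) as [Hca|Hca].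
  - rewrite <- Hxp_alpha; apply (Ca_Derive_increasing a f Hf); lra.
  - rewrite (Ca_Derive_right a f Ha Hf); lra.
Qed.

Lemma Derive_lt_alpha c : c < xp -> Derive f c < alpha.
Proof.
  intros Hc; destruct x_plus_spec as [Hxp Hxp_alpha].
  destruct (Rle_or_lt (- a) c) as [Hca|Hca].
  - rewrite <- Hxp_alpha; apply (Ca_Derive_increasing a f Hf); lra.
  - rewrite (Ca_Derive_left a f Ha Hf); lra.
Qed.

Lemma F_al_derivable c : derivable_pt_lim F c (Derive f c - alpha).
Proof.
  replace (Derive f c - alpha) with (Derive f c - alpha * 1) by ring.
  apply (derivable_pt_lim_minus f (fun s => alpha * s)).
  - apply (Ca_derivable a f Hf).
  - apply (derivable_pt_lim_scal (fun s => s)), derivable_pt_lim_id.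
Qed.

Lemma F_al_continuity : continuity F.
Proof. intros x; apply derivable_continuous_pt; eexists; apply F_al_derivable. Qed.

Lemma F_al_increasing u v : xp <= u -> u < v -> F u < F v.
Proof.
  intros Hu Huv.
  destruct (MVT_cor2 F (fun c => Derive f c - alpha) u v Huv) as [c [Hc Hcuv]].
  { intros c _; apply F_al_derivable. }
  assert (alpha < Derive f c) by (apply Derive_gt_alpha; lra).
  nra.
Qed.

Lemma F_al_decreasing u v : v <= xp -> u < v -> F v < F u.
Proof.
  intros Hv Huv.
  destruct (MVT_cor2 F (fun c => Derive f c - alpha) u v Huv) as [c [Hc Hcuv]].
  { intros c _; apply F_al_derivable. }
  assert (Derive f c < alpha) by (apply Derive_lt_alpha; lra).
  nra.
Qed.

Lemma F_al_min x : F xp <= F x.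
Proof.
  destruct (Rtotal_order x xp) as [Hx|[->|Hx]].
  - left; now apply F_al_decreasing.
  - lra.
  - left; now apply F_al_increasing.
Qed.

Lemma F_al_lt_reflect_right u v : xp <= u -> xp <= v -> F u < F v -> u < v.
Proof.
  intros Hu Hv HF; destruct (Rtotal_order u v) as [|[->|Hvu]]; trivial.
  - lra.
  - specialize (F_al_increasing v u Hv Hvu); lra.
Qed.

Lemma F_al_inj_right u v : xp <= u -> xp <= v -> F u = F v -> u = v.
Proof.
  intros Hu Hv HF; destruct (Rtotal_order u v) as [Huv|[|Hvu]]; trivial.
  - specialize (F_al_increasing u v Hu Huv); lra.
  - specialize (F_al_increasing v u Hv Hvu); lra.
Qed.

Lemma F_al_diff_bound u v : u <= v ->
  - (1 + alpha) * (v - u) <= F v - F u <= (1 - alpha) * (v - u).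
Proof.
  intros Huv; unfold F_al.
  pose proof (proj1 (Rabs_le_between _ _) (Ca_diff_bound a f Ha Hf u v Huv)); nra.
Qed.

Lemma F_al_inv_spec y : F xp <= y -> xp <= F_inv y /\ F (F_inv y) = y.
Proof.
  intros Hy; unfold F_al_inv; apply choose_R_spec.
  destruct x_plus_spec as [Hxp _].
  set (B := a + Rabs y / (1 - alpha)).
  assert (HyB : Rabs y / (1 - alpha) * (1 - alpha) = Rabs y) by (field; lra).
  assert (HB : 0 <= Rabs y / (1 - alpha))
    by (apply Rdiv_le_0_compat; [apply Rabs_pos|lra]).
  assert (HFB : F B = (1 - alpha) * B).
  { unfold F_al; rewrite (Ca_right a f Ha Hf B) by (unfold B; lra); ring. }
  destruct (IVT_le F xp B y F_al_continuity) as [z Hz].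
  - unfold B; lra.
  - split; [exact Hy|].
    rewrite HFB; unfold B; assert (y <= Rabs y) by apply Rle_abs; nra.
  - exists z; lra.
Qed.

Lemma phi_spec x : xp <= phi x /\ F (phi x) = F x.
Proof. apply F_al_inv_spec, F_al_min. Qed.

Lemma phi_right x : xp <= x -> phi x = x.
Proof. intros Hx; apply F_al_inj_right; trivial; apply phi_spec. Qed.

Lemma phi_continuity : continuity phi.
Proof.
  intros x0; apply (continuity_pt_left_inverse F phi xp x0).
  - apply F_al_continuity.
  - apply F_al_increasing.
  - apply phi_spec.
Qed.

Lemma delta_left x : x <= - a -> delta x = 0.
Proof.
  intros Hx; destruct x_plus_spec as [Hxp _].
  set (z := - (1 + alpha) * x / (1 - alpha)).
  assert (Hz : (1 - alpha) * z = - (1 + alpha) * x) by (unfold z; field; lra).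
  assert (Hza : a <= z) by (apply (Rmult_le_reg_l (1 - alpha)); [lra|]; rewrite Hz; nra).
  assert (HFx : F x = - (1 + alpha) * x)
    by (unfold F_al; rewrite (Ca_left a f Ha Hf x Hx); ring).
  assert (Hphi : phi x = z).
  { destruct (phi_spec x) as [Hphi_ge HFphi].
    apply F_al_inj_right; trivial; [lra|].
    rewrite HFphi, HFx; unfold F_al; rewrite (Ca_right a f Ha Hf z Hza); lra. }
  unfold Defs.delta; rewrite Hphi, HFx; unfold z; field; lra.
Qed.

Lemma delta_nondecreasing x y : x <= y <= xp -> delta x <= delta y.
Proof.
  intros Hxy; destruct (Req_dec x y) as [->|Hne]; [lra|].
  assert (HF : F y < F x) by (apply F_al_decreasing; lra).
  destruct (phi_spec x) as [Hx HFx]; destruct (phi_spec y) as [Hy HFy].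
  assert (Hphi : phi y < phi x) by (apply F_al_lt_reflect_right; trivial; lra).
  destruct (F_al_diff_bound (phi y) (phi x)) as [_ Hdiff]; [lra|].
  rewrite HFx, HFy in Hdiff.
  unfold Defs.delta.
  enough (/ (1 - alpha) * (F x - F y) <= phi x - phi y) by lra.
  apply (Rmult_le_reg_l (1 - alpha)); [lra|].
  rewrite <- Rmult_assoc, Rinv_r, Rmult_1_l; lra.
Qed.

Lemma shift_continuity : continuity (fun x => x + delta x).
Proof.
  apply (continuity_plus (fun x => x) delta); [exact continuity_pt_id|].
  apply (continuity_minus (fun x => / (1 - alpha) * F x) phi).
  - apply (continuity_scal F), F_al_continuity.
  - apply phi_continuity.
Qed.

Lemma shift_inj u v : u <= xp -> v <= xp -> u + delta u = v + delta v -> u = v.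
Proof.
  intros Hu Hv Huv.
  destruct (Rle_or_lt u v) as [Hle|Hlt].
  - pose proof (delta_nondecreasing u v ltac:(lra)); lra.
  - pose proof (delta_nondecreasing v u ltac:(lra)); lra.
Qed.

Lemma tau_spec x : x <= s_al -> tau x <= xp /\ tau x + delta (tau x) = x.
Proof.
  intros Hx; unfold Defs.tau; apply choose_R_spec.
  destruct x_plus_spec as [Hxp _].
  destruct (Rle_or_lt x (- a)) as [Hleft|Hright].
  - exists x; rewrite delta_left by lra; split; lra.
  - destruct (IVT_le _ (- a) xp x shift_continuity) as [z Hz]; [lra| |].
    + rewrite delta_left by lra; split; [lra|exact Hx].
    + exists z; lra.
Qed.

Lemma s_al_ge : - a <= s_al.
Proof.
  destruct x_plus_spec as [Hxp _].
  pose proof (delta_nondecreasing (- a) xp ltac:(lra)) as Hdelta.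
  rewrite delta_left in Hdelta by lra; unfold Defs.s_al; lra.
Qed.

Lemma tau_left x : x <= - a -> tau x = x.
Proof.
  intros Hx; destruct x_plus_spec as [Hxp _].
  destruct (tau_spec x ltac:(pose proof s_al_ge; lra)) as [Htau Hshift].
  apply shift_inj; [exact Htau|lra|].
  rewrite Hshift, delta_left; lra.
Qed.

Lemma tau_s_al : tau s_al = xp.
Proof.
  destruct (tau_spec s_al (Rle_refl _)) as [Htau Hshift].
  apply shift_inj; [exact Htau|lra|exact Hshift].
Qed.

Lemma tau_diff_bound u v : u <= v <= s_al -> 0 <= tau v - tau u <= v - u.
Proof.
  intros Huv.
  destruct (tau_spec u ltac:(lra)) as [Hu Hshift_u].
  destruct (tau_spec v ltac:(lra)) as [Hv Hshift_v].
  destruct (Rle_or_lt (tau u) (tau v)) as [Hle|Hlt].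
  - pose proof (delta_nondecreasing (tau u) (tau v) ltac:(lra)); lra.
  - pose proof (delta_nondecreasing (tau v) (tau u) ltac:(lra)); lra.
Qed.

Lemma s_al_eq : s_al = F xp / (1 - alpha).
Proof.
  unfold Defs.s_al, Defs.delta; rewrite phi_right by lra; field; lra.
Qed.

Lemma Sh_left x : x <= s_al -> Sh a alpha f x = alpha * x + F (tau x).
Proof. intros Hx; unfold Sh; destruct (Rle_dec x s_al); [reflexivity|contradiction]. Qed.

Lemma Sh_right x : s_al <= x -> Sh a alpha f x = x.
Proof.
  intros Hx; unfold Sh; destruct (Rle_dec x s_al) as [Hle|]; [|reflexivity].
  replace x with s_al by lra; rewrite tau_s_al, s_al_eq; field; lra.
Qed.

Lemma Sh_lipschitz : lipschitz (1 + 2 * alpha) (Sh a alpha f).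
Proof.
  apply (lipschitz_glue _ _ s_al).
  - intros u v Huv; rewrite !Sh_left by lra.
    pose proof (tau_diff_bound u v Huv) as Htau.
    pose proof (F_al_diff_bound (tau u) (tau v) ltac:(lra)) as HF.
    apply Rabs_le_between; nra.
  - intros u v Huv; rewrite !Sh_right by lra.
    rewrite Rabs_pos_eq; nra.
Qed.

Lemma Sh_abs_outside x : Rmax a (Rabs s_al) <= Rabs x -> Sh a alpha f x = Rabs x.
Proof.
  intros Hx.
  pose proof (Rmax_l a (Rabs s_al)); pose proof (Rmax_r a (Rabs s_al)).
  pose proof (proj1 (Rabs_le_between s_al _) (Rle_refl _)).
  destruct (Rle_or_lt 0 x) as [Hpos|Hneg].
  - rewrite (Rabs_pos_eq x) in Hx |- * by lra; apply Sh_right; lra.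
  - rewrite (Rabs_left x) in Hx |- * by lra.
    rewrite Sh_left, tau_left by lra.
    unfold F_al; rewrite (Ca_left a f Ha Hf x) by lra; ring.
Qed.

End Shift.

Theorem proposition3p26 (a alpha : R) (f : R -> R) :
  0 < a -> 0 <= alpha < 1 -> in_Ca a f ->
  forall b : bool, forall eps : R, 0 < eps ->
    exists eta0 : R, 0 < eta0 /\
      forall eta : R, 0 < eta < 1 -> eta < eta0 ->
        forall s : R,
          Rabs (Sh a alpha f s - g_pm b eta (Sh a alpha f) s) <= eps.
Proof.
  intros Ha Hal Hf.
  apply (dilation_uniformly_close _ (1 + 2 * alpha) (Rmax a (Rabs (s_al a alpha f)))).
  - lra.
  - pose proof (Rmax_l a (Rabs (s_al a alpha f))); lra.
  - now apply Sh_lipschitz.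
  - now apply Sh_abs_outside.
Qed.
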